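(* Let $g(x)=e^{-5x^2}$, $s_1=1.5$, $s_2=-1.5$, $\Phi_0(x)=x^2$, and let $\psi_1(x)=\widetilde\psi(2x)$, where $\widetilde\psi(x)=e^{-x^2/(1-x^2)}$ for $|x|<1$ and $\widetilde\psi(x)=0$ otherwise. For $\varepsilon>0$ and $y>0$ define $$u^\varepsilon(x,y)=g(x-s_1-y)\,e^{i\Phi_0(x-y)/\varepsilon}+g(x-s_2+y)\,e^{i\Phi_0(x+y)/\varepsilon},$$ which is the value at time $T=1$ of the exact solution of the one-dimensional wave equation $u_{tt}=y^2u_{xx}$ with initial data $u(0,x)=(g(x-s_1)+g(x-s_2))e^{i\Phi_0(x)/\varepsilon}$ and $u_t(0,x)=-y\big(g'(x-s_1)+\tfrac{i\Phi_0'(x)}{\varepsilon}g(x-s_1)\big)e^{i\Phi_0(x)/\varepsilon}+y\big(g'(x-s_2)+\tfrac{i\Phi_0'(x)}{\varepsilon}g(x-s_2)\big)e^{i\Phi_0(x)/\varepsilon}$. Define $$\mathcal Q^\varepsilon_1(y)=\int_{\mathbb R}|u^\varepsilon(x,y)|^2\,\psi_1(x)\,dx .$$ Then for every compact interval $[a,b]\subset(0,\infty)$ and every integer $k\ge 0$ there is a constant $C_k$, independent of $\varepsilon\in(0,1]$, such that $$\sup_{y\in[a,b]}\left|\frac{d^k}{dy^k}\mathcal Q^\varepsilon_1(y)\right|\le C_k\qquad\text{for all }\varepsilon\in(0,1].$$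
   Context: Here $\varepsilon$ is a small positive parameter representing the wavelength; $\psi_1$ is a smooth compactly supported real-valued function on $\mathbb R$. The point of the statement is that the bound on all $y$-derivatives of the quadratic quantity $\mathcal Q_1^\varepsilon$ is uniform in $\varepsilon$, even though $u^\varepsilon$ itself oscillates on scale $\varepsilon$ in both $x$ and $y$. *)

From Stdlib Require Import Reals Lra ClassicalEpsilon.
Open Scope R_scope.

(* Total Riemann integral on [a,b]: the Riemann integral if f is Riemann
   integrable there (value independent of the integrability proof), else 0. *)
Definition RInt (f : R -> R) (a b : R) : R :=
  match excluded_middle_informative (exists _ : Riemann_integrable f a b, True) with
  | left H => RiemannInt (proj1_sig (constructive_indefinite_description _ H))
  | right _ => 0
  end.

(* Total derivative: the derivative f'(x) if f is differentiable at x, else 0.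
   The theorem separately asserts differentiability, so the default is never used. *)
Definition Deriv (f : R -> R) (x : R) : R :=
  match excluded_middle_informative (exists l, derivable_pt_lim f x l) with
  | left H => proj1_sig (constructive_indefinite_description _ H)
  | right _ => 0
  end.

Fixpoint Dn (k : nat) (f : R -> R) : R -> R :=
  match k with
  | O => f
  | S k' => Deriv (Dn k' f)
  end.

Definition g (x : R) : R := exp (- 5 * x ^ 2).
Definition s1 : R := 3 / 2.
Definition s2 : R := - (3 / 2).
Definition Phi0 (x : R) : R := x ^ 2.

Definition psi_tilde (x : R) : R :=
  if Rlt_dec (Rabs x) 1 then exp (- (x ^ 2) / (1 - x ^ 2)) else 0.
Definition psi1 (x : R) : R := psi_tilde (2 * x).

(* u^eps(x,y) = g(x-s1-y) e^{i Phi0(x-y)/eps} + g(x-s2+y) e^{i Phi0(x+y)/eps},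
   given by its real and imaginary parts (no complex type in Stdlib). *)
Definition u_re (eps x y : R) : R :=
  g (x - s1 - y) * cos (Phi0 (x - y) / eps) + g (x - s2 + y) * cos (Phi0 (x + y) / eps).
Definition u_im (eps x y : R) : R :=
  g (x - s1 - y) * sin (Phi0 (x - y) / eps) + g (x - s2 + y) * sin (Phi0 (x + y) / eps).

Definition u_abs2 (eps x y : R) : R := u_re eps x y ^ 2 + u_im eps x y ^ 2.

(* Q_1^eps(y) = int_R |u^eps(x,y)|^2 psi1(x) dx.  Since psi1 vanishes outside
   (-1/2,1/2), the integral over R equals the integral over [-1,1]. *)
Definition Q1 (eps y : R) : R := RInt (fun x => u_abs2 eps x y * psi1 x) (-1) 1.

(* Put w = 4/eps.  Expanding the square,
     |u^eps|^2 psi1 = A + B cos (w x y),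
   where A and B are smooth, independent of eps, and B vanishes for |x| >= 1/2
   together with psi1.  Differentiating in y under the integral sign turns
   B cos (w x y) into (d_y B) cos (w x y) - w x B sin (w x y), whose second term is
   of size 1/eps.  But
     - w x B sin (w x y) = d_x (x B cos (w x y) / y) - (B + x d_x B) cos (w x y) / y,
   and the x-derivative integrates to 0 since B vanishes at x = +-1.  Hence every
   derivative of Q1 is again an integral of A_k + B_k cos (w x y) with eps-free
   A_k, B_k, bounded on [-1,1] x [a,b] independently of eps.
   The smoothness of psi1 is the classical computation: its derivatives are
   P_n(x) q^(-2n) exp (-(2x)^2/q) with q = 1 - (2x)^2 and polynomials P_n, and
   q^(-m) exp (-1/q) <= (m+2)! q^2 makes them vanish to second order at |2x| = 1. *)

From Pilot Require Import Defs.
From Stdlib Require Import Reals Lra Lia ClassicalEpsilon.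
From Coquelicot Require Import Coquelicot.
Open Scope R_scope.

Lemma derivable_pt_lim_rw f x l l' :
  derivable_pt_lim f x l -> l = l' -> derivable_pt_lim f x l'.
Proof. intros H <-; exact H. Qed.

Lemma derivable_pt_lim_of_sq_remainder f x l C d : 0 < d ->
  (forall h, Rabs h < d -> Rabs (f (x + h) - f x - h * l) <= C * h ^ 2) ->
  derivable_pt_lim f x l.
Proof.
  intros Hd Hrem e He.
  set (K := Rabs C + 1).
  assert (HK : 0 < K) by (unfold K; pose proof (Rabs_pos C); lra).
  assert (Hdelta : 0 < Rmin d (e / K)) by (apply Rmin_pos; [lra | apply Rdiv_lt_0_compat; lra]).
  exists (mkposreal _ Hdelta); intros h Hh0 Hh; simpl in Hh.
  assert (Hhd : Rabs h < d) by (eapply Rlt_le_trans; [exact Hh | apply Rmin_l]).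
  assert (Hhe : Rabs h * K < e).
  { apply (Rmult_lt_reg_r (/ K)); [apply Rinv_0_lt_compat; lra |].
    rewrite Rmult_assoc, Rinv_r, Rmult_1_r by lra.
    eapply Rlt_le_trans; [exact Hh | apply Rmin_r]. }
  assert (Habs : 0 < Rabs h) by (apply Rabs_pos_lt; exact Hh0).
  replace ((f (x + h) - f x) / h - l) with ((f (x + h) - f x - h * l) / h) by (field; exact Hh0).
  unfold Rdiv; rewrite Rabs_mult, Rabs_inv.
  apply (Rmult_lt_reg_r (Rabs h)); [exact Habs |].
  rewrite Rmult_assoc, Rinv_l, Rmult_1_r by lra.
  eapply Rle_lt_trans; [apply Hrem, Hhd |].
  rewrite <- pow2_abs.
  assert (C * Rabs h ^ 2 <= K * Rabs h * Rabs h).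
  { replace (C * Rabs h ^ 2) with (C * Rabs h * Rabs h) by ring.
    apply Rmult_le_compat_r, Rmult_le_compat_r; [lra | lra |].
    unfold K; pose proof (Rle_abs C); lra. }
  nra.
Qed.

Lemma taylor_sq_remainder f f1 f2 y0 h M :
  (forall t, Rabs (t - y0) <= Rabs h ->
     derivable_pt_lim f t (f1 t) /\ derivable_pt_lim f1 t (f2 t) /\ Rabs (f2 t) <= M) ->
  Rabs (f (y0 + h) - f y0 - h * f1 y0) <= M * h ^ 2.
Proof.
  intros H.
  set (phi := fun t => f t - (t - y0) * f1 y0).
  replace (f (y0 + h) - f y0 - h * f1 y0) with (phi (y0 + h) - phi y0) by (unfold phi; ring).
  replace (M * h ^ 2) with (M * Rabs h * Rabs (y0 + h - y0))
    by (replace (y0 + h - y0) with h by ring; rewrite <- (pow2_abs h); ring).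
  apply (bounded_variation phi (fun t => f1 t - f1 y0)).
  replace (y0 + h - y0) with h by ring.
  intros t Ht; split.
  - apply is_derive_Reals; unfold phi. eapply derivable_pt_lim_rw.
    + apply derivable_pt_lim_minus; [apply H, Ht |].
      apply (derivable_pt_lim_mult (fun t => t - y0) (fun _ => f1 y0)).
      * apply derivable_pt_lim_minus; [apply derivable_pt_lim_id | apply derivable_pt_lim_const].
      * apply derivable_pt_lim_const.
    + ring.
  - assert (HM : Rabs (f1 t - f1 y0) <= M * Rabs (t - y0)).
    { apply (bounded_variation f1 f2). intros s Hs. split.
      - apply is_derive_Reals, H. lra.
      - apply H. lra. }
    assert (0 <= M) by (destruct (H t Ht) as [_ [_ Hb]]; pose proof (Rabs_pos (f2 t)); lra).
    eapply Rle_trans; [exact HM |]. apply Rmult_le_compat_l; assumption.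
Qed.

Lemma derivable_pt_lim_RInt_param (F F1 F2 : R -> R -> R) a b y0 d M :
  a <= b -> 0 < d ->
  (forall y, ex_RInt (fun x => F x y) a b) ->
  ex_RInt (fun x => F1 x y0) a b ->
  (forall x y, a <= x <= b -> Rabs (y - y0) <= d ->
     derivable_pt_lim (F x) y (F1 x y) /\ derivable_pt_lim (F1 x) y (F2 x y) /\
     Rabs (F2 x y) <= M) ->
  derivable_pt_lim (fun y => RInt (fun x => F x y) a b) y0 (RInt (fun x => F1 x y0) a b).
Proof.
  intros Hab Hd HF HF1 Hder.
  apply (derivable_pt_lim_of_sq_remainder _ _ _ ((b - a) * M) d Hd).
  intros h Hh.
  assert (Hrem : is_RInt (fun x => F x (y0 + h) - F x y0 - h * F1 x y0) a b
                   (RInt (fun x => F x (y0 + h)) a b - RInt (fun x => F x y0) a b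
                    - h * RInt (fun x => F1 x y0) a b)).
  { apply (is_RInt_minus (fun x => F x (y0 + h) - F x y0) (fun x => h * F1 x y0)).
    - apply (is_RInt_minus (fun x => F x (y0 + h)) (fun x => F x y0));
        exact (RInt_correct _ _ _ (HF _)).
    - apply (is_RInt_scal (fun x => F1 x y0)), (RInt_correct _ _ _ HF1). }
  rewrite <- (is_RInt_unique _ _ _ _ Hrem), Rmult_assoc.
  apply abs_RInt_le_const; [exact Hab | eexists; exact Hrem |].
  intros x Hx.
  apply (taylor_sq_remainder (F x) (F1 x) (F2 x)).
  intros t Ht. apply Hder; [exact Hx | lra].
Qed.

Lemma Deriv_unique f x l : derivable_pt_lim f x l -> Deriv f x = l.
Proof.
  intros H. unfold Deriv. destruct excluded_middle_informative as [Hex | Hnex].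
  - destruct constructive_indefinite_description as [l' H']; simpl.
    exact (uniqueness_limite f x l' l H' H).
  - exfalso; apply Hnex; exists l; exact H.
Qed.

Lemma Dn_eq_on_pos f (d : nat -> R -> R) :
  (forall y, 0 < y -> f y = d 0%nat y) ->
  (forall n y, 0 < y -> derivable_pt_lim (d n) y (d (S n) y)) ->
  forall n y, 0 < y -> Dn n f y = d n y.
Proof.
  intros H0 HD n. induction n as [| n IH]; intros y Hy; [exact (H0 y Hy) |].
  simpl. apply Deriv_unique.
  apply (derivable_pt_lim_locally_ext (d n) _ y 0 (2 * y)); [lra | | apply HD, Hy].
  intros z Hz; symmetry; apply IH; lra.
Qed.

Lemma Defs_RInt_eq f a b : a <= b -> (forall x, a <= x <= b -> continuity_pt f x) ->
  Defs.RInt f a b = RInt f a b.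
Proof.
  intros Hab Hc. unfold Defs.RInt. destruct excluded_middle_informative as [Hex | Hnex].
  - destruct constructive_indefinite_description as [pr Hpr]; simpl.
    symmetry; apply RInt_Reals.
  - exfalso; apply Hnex; exists (continuity_implies_RiemannInt Hab Hc); trivial.
Qed.

Lemma pow_div_fact_le_exp x n : 0 <= x -> x ^ n / INR (Factorial.fact n) <= exp x.
Proof.
  intros Hx. eapply Rle_trans; [| apply (exp_ge_taylor x n Hx)].
  destruct n as [| n]; [simpl; lra |].
  rewrite tech5.
  assert (0 <= sum_f_R0 (fun k => x ^ k / INR (Factorial.fact k)) n).
  { apply cond_pos_sum; intros k.
    apply Rdiv_le_0_compat; [apply pow_le, Hx | apply INR_fact_lt_0]. }
  lra.
Qed.

Lemma inv_pow_mul_exp_le q m : 0 < q ->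
  (/ q) ^ m * exp (- / q) <= INR (Factorial.fact (m + 2)) * q ^ 2.
Proof.
  intros Hq.
  assert (Hf : 0 < INR (Factorial.fact (m + 2))) by apply INR_fact_lt_0.
  assert (He := pow_div_fact_le_exp (/ q) (m + 2) (Rlt_le _ _ (Rinv_0_lt_compat _ Hq))).
  rewrite exp_Ropp.
  apply (Rmult_le_reg_r (exp (/ q) / INR (Factorial.fact (m + 2)))).
  { apply Rdiv_lt_0_compat; [apply exp_pos | exact Hf]. }
  replace ((/ q) ^ m * / exp (/ q) * (exp (/ q) / INR (Factorial.fact (m + 2))))
    with ((/ q) ^ (m + 2) / INR (Factorial.fact (m + 2)) * q ^ 2)
    by (rewrite pow_add; field; split; [lra | split; [apply Rgt_not_eq, exp_pos | lra]]).
  replace (INR (Factorial.fact (m + 2)) * q ^ 2 * (exp (/ q) / INR (Factorial.fact (m + 2))))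
    with (exp (/ q) * q ^ 2) by (field; lra).
  apply Rmult_le_compat_r; [apply pow2_ge_0 | exact He].
Qed.

Lemma continuous_bounded_on f a b : a <= b ->
  (forall x, a <= x <= b -> continuity_pt f x) ->
  exists M, forall x, a <= x <= b -> Rabs (f x) <= M.
Proof.
  intros Hab Hc.
  destruct (continuity_ab_maj (fun x => Rabs (f x)) a b Hab) as [c [Hmax _]].
  - intros x Hx. apply (continuity_pt_comp f Rabs); [apply Hc, Hx | apply Rcontinuity_abs].
  - exists (Rabs (f c)); exact Hmax.
Qed.

Inductive poly := PConst (c : R) | PX | PAdd (p q : poly) | PMul (p q : poly).

Fixpoint peval (p : poly) (x : R) : R :=
  match p with
  | PConst c => c
  | PX => x
  | PAdd p q => peval p x + peval q x
  | PMul p q => peval p x * peval q x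
  end.

Fixpoint pderiv (p : poly) : poly :=
  match p with
  | PConst _ => PConst 0
  | PX => PConst 1
  | PAdd p q => PAdd (pderiv p) (pderiv q)
  | PMul p q => PAdd (PMul (pderiv p) q) (PMul p (pderiv q))
  end.

Lemma peval_derivable p x : derivable_pt_lim (peval p) x (peval (pderiv p) x).
Proof.
  induction p; simpl.
  - apply derivable_pt_lim_const.
  - apply derivable_pt_lim_id.
  - apply (derivable_pt_lim_plus (peval p1) (peval p2)); assumption.
  - apply (derivable_pt_lim_mult (peval p1) (peval p2)); assumption.
Qed.

Lemma peval_bounded p : exists M, forall x, -1 <= x <= 1 -> Rabs (peval p x) <= M.
Proof.
  apply continuous_bounded_on; [lra |].
  intros x _; apply derivable_continuous_pt; exists (peval (pderiv p) x).
  apply peval_derivable.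
Qed.

Definition bump_q (x : R) : R := 1 - (2 * x) ^ 2.

Definition bump_q_poly : poly := PAdd (PConst 1) (PMul (PConst (-4)) (PMul PX PX)).

Definition bump_step (P : poly) (m : nat) : poly :=
  PAdd (PMul (pderiv P) (PMul bump_q_poly bump_q_poly))
    (PAdd (PMul (PConst (8 * INR m)) (PMul PX (PMul bump_q_poly P)))
          (PMul (PConst (-8)) (PMul PX P))).

Definition bump_inner (P : poly) (m : nat) (x : R) : R :=
  peval P x * ((/ bump_q x) ^ m * exp (- (2 * x) ^ 2 / bump_q x)).

Definition bump_ext (P : poly) (m : nat) (x : R) : R :=
  if Rlt_dec (Rabs (2 * x)) 1 then bump_inner P m x else 0.

Fixpoint bump_poly (n : nat) : poly :=
  match n with
  | O => PConst 1
  | S n => bump_step (bump_poly n) (2 * n)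
  end.

Definition bump (n : nat) (x : R) : R := bump_ext (bump_poly n) (2 * n) x.

Lemma bump_inner_derivable P m x : bump_q x <> 0 ->
  derivable_pt_lim (bump_inner P m) x (bump_inner (bump_step P m) (m + 2) x).
Proof.
  intros Hq. unfold bump_inner.
  set (E := fun t => (/ bump_q t) ^ m * exp (- (2 * t) ^ 2 / bump_q t)).
  assert (HE : derivable_pt_lim E x
     ((8 * INR m * x * bump_q x - 8 * x) * (/ bump_q x) ^ (m + 2)
        * exp (- (2 * x) ^ 2 / bump_q x))).
  { apply is_derive_Reals. unfold E, bump_q in *. auto_derive; [repeat split; lra |].
    replace (1 + - (2 * x * (2 * x * 1))) with (1 - (2 * x) ^ 2) by ring.
    unfold Rdiv; destruct m as [| m]; simpl pred; rewrite ?S_INR, !pow_add; simpl; field; lra. }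
  eapply derivable_pt_lim_rw.
  - apply (derivable_pt_lim_mult (peval P) E); [apply peval_derivable | exact HE].
  - unfold E, bump_step, bump_q_poly. simpl peval. rewrite !pow_add.
    replace (1 + -4 * (x * x)) with (bump_q x) by (unfold bump_q; ring).
    field. exact Hq.
Qed.

Lemma bump_q_pos x : Rabs (2 * x) < 1 -> 0 < bump_q x.
Proof.
  intros H. unfold bump_q. rewrite <- pow2_abs.
  pose proof (Rabs_pos (2 * x)). nra.
Qed.

Lemma bump_q_sq_le x0 h : Rabs (2 * x0) = 1 -> Rabs h < 1 / 2 ->
  bump_q (x0 + h) ^ 2 <= 36 * h ^ 2.
Proof.
  intros Hx0 Hh.
  assert (Hsq : (2 * x0) ^ 2 = 1) by (rewrite <- pow2_abs, Hx0; ring).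
  assert (Hb : Rabs (2 * x0 + h) <= 3 / 2) by (eapply Rle_trans; [apply Rabs_triang | lra]).
  assert (Hq : bump_q (x0 + h) = - 4 * h * (2 * x0 + h))
    by (unfold bump_q; rewrite <- Hsq; ring).
  rewrite Hq.
  replace ((- 4 * h * (2 * x0 + h)) ^ 2) with (16 * h ^ 2 * (2 * x0 + h) ^ 2) by ring.
  rewrite <- (pow2_abs (2 * x0 + h)).
  assert (Rabs (2 * x0 + h) ^ 2 <= (3 / 2) ^ 2)
    by (apply pow_incr; split; [apply Rabs_pos | exact Hb]).
  pose proof (pow2_ge_0 h). nra.
Qed.

(* On the support [exp (- (2 x)^2 / q) = e * exp (- / q)], which is flat at [q = 0]. *)
Lemma bump_inner_le_q_sq P m : exists C, 0 <= C /\
  forall x, -1 <= x <= 1 -> 0 < bump_q x -> Rabs (bump_inner P m x) <= C * bump_q x ^ 2.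
Proof.
  destruct (peval_bounded P) as [MP HMP].
  exists (Rabs MP * exp 1 * INR (Factorial.fact (m + 2))).
  pose proof (exp_pos 1). pose proof (INR_fact_lt_0 (m + 2)). pose proof (Rabs_pos MP).
  split; [apply Rmult_le_pos; [apply Rmult_le_pos |]; lra |].
  intros x Hx Hq.
  assert (Hexp : exp (- (2 * x) ^ 2 / bump_q x) = exp 1 * exp (- / bump_q x)).
  { rewrite <- exp_plus. f_equal. unfold bump_q in *. field. lra. }
  assert (HP : Rabs (peval P x) <= Rabs MP)
    by (eapply Rle_trans; [apply HMP, Hx | apply Rle_abs]).
  assert (Hk := inv_pow_mul_exp_le (bump_q x) m Hq).
  assert (Hk0 : 0 <= (/ bump_q x) ^ m * exp (- / bump_q x)).
  { apply Rmult_le_pos; [apply pow_le; left; apply Rinv_0_lt_compat, Hq | left; apply exp_pos]. }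
  unfold bump_inner. rewrite Hexp.
  replace ((/ bump_q x) ^ m * (exp 1 * exp (- / bump_q x)))
    with (exp 1 * ((/ bump_q x) ^ m * exp (- / bump_q x))) by ring.
  rewrite Rabs_mult, (Rabs_right (exp 1 * _)) by (apply Rle_ge, Rmult_le_pos; lra).
  replace (Rabs MP * exp 1 * INR (Factorial.fact (m + 2)) * bump_q x ^ 2)
    with (Rabs MP * (exp 1 * (INR (Factorial.fact (m + 2)) * bump_q x ^ 2))) by ring.
  apply Rmult_le_compat;
    [apply Rabs_pos | apply Rmult_le_pos; lra | exact HP | apply Rmult_le_compat_l; lra].
Qed.

Lemma bump_ext_derivable_boundary P m x0 : Rabs (2 * x0) = 1 ->
  derivable_pt_lim (bump_ext P m) x0 0.
Proof.
  intros Hx0. destruct (bump_inner_le_q_sq P m) as [C [HC HCq]].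
  apply (derivable_pt_lim_of_sq_remainder _ _ _ (C * 36) (1 / 2)); [lra |].
  intros h Hh.
  assert (Hzero : bump_ext P m x0 = 0)
    by (unfold bump_ext; destruct Rlt_dec; [lra | reflexivity]).
  rewrite Hzero, Rmult_0_r, !Rminus_0_r. unfold bump_ext.
  destruct Rlt_dec as [Hin | Hout].
  - assert (Hq := bump_q_pos _ Hin).
    assert (Hx : -1 <= x0 + h <= 1).
    { apply Rabs_le_between. rewrite Rabs_mult, Rabs_right in Hx0 by lra.
      eapply Rle_trans; [apply Rabs_triang | lra]. }
    eapply Rle_trans; [apply HCq; assumption |].
    rewrite Rmult_assoc. apply Rmult_le_compat_l; [exact HC | apply bump_q_sq_le; assumption].
  - rewrite Rabs_R0. apply Rmult_le_pos; [nra | apply pow2_ge_0].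
Qed.

Lemma Rabs_2x_lt_1 x : Rabs (2 * x) < 1 <-> -1 / 2 < x < 1 / 2.
Proof.
  rewrite Rabs_mult, (Rabs_right 2) by lra.
  destruct (Rcase_abs x); [rewrite Rabs_left | rewrite Rabs_right]; lra.
Qed.

Lemma bump_ext_derivable P m x :
  derivable_pt_lim (bump_ext P m) x (bump_ext (bump_step P m) (m + 2) x).
Proof.
  unfold bump_ext at 2.
  destruct (Rtotal_order (Rabs (2 * x)) 1) as [Hin | [Hbd | Hout]].
  - destruct Rlt_dec as [_ | Hn]; [| contradiction].
    apply (derivable_pt_lim_locally_ext (bump_inner P m) _ x (-1 / 2) (1 / 2)).
    + apply Rabs_2x_lt_1, Hin.
    + intros z Hz. unfold bump_ext. destruct Rlt_dec as [_ | Hn]; [reflexivity |].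
      exfalso; apply Hn, Rabs_2x_lt_1, Hz.
    + apply bump_inner_derivable. apply Rgt_not_eq, bump_q_pos, Hin.
  - destruct Rlt_dec; [lra |]. apply bump_ext_derivable_boundary, Hbd.
  - destruct Rlt_dec; [lra |].
    assert (Hx : x < -1 / 2 \/ 1 / 2 < x).
    { rewrite Rabs_mult, (Rabs_right 2) in Hout by lra.
      destruct (Rcase_abs x); [rewrite Rabs_left in Hout | rewrite Rabs_right in Hout]; lra. }
    assert (Hzero : forall z, z < -1 / 2 \/ 1 / 2 < z -> bump_ext P m z = 0).
    { intros z Hz. unfold bump_ext.
      destruct Rlt_dec as [Hin | _]; [apply Rabs_2x_lt_1 in Hin; lra | reflexivity]. }
    destruct Hx as [Hx | Hx];
      [apply (derivable_pt_lim_locally_ext (fun _ => 0) _ x (x - 1) (-1 / 2))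
      | apply (derivable_pt_lim_locally_ext (fun _ => 0) _ x (1 / 2) (x + 1))];
      solve [lra | apply derivable_pt_lim_const | intros z Hz; symmetry; apply Hzero; lra].
Qed.

Lemma bump_derivable n x : derivable_pt_lim (bump n) x (bump (S n) x).
Proof.
  unfold bump. replace (2 * S n)%nat with (2 * n + 2)%nat by lia.
  apply bump_ext_derivable.
Qed.

Lemma bump_vanish n x : x <= -1 / 2 \/ 1 / 2 <= x -> bump n x = 0.
Proof.
  intros H. unfold bump, bump_ext.
  destruct Rlt_dec as [Hin | _]; [apply Rabs_2x_lt_1 in Hin; lra | reflexivity].
Qed.

Lemma bump_0 x : bump 0 x = psi1 x.
Proof.
  unfold bump, bump_ext, bump_inner, psi1, psi_tilde, bump_q. simpl.
  destruct Rlt_dec; [ring | reflexivity].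
Qed.

Lemma bump_bounded n : exists M, forall x, -1 <= x <= 1 -> Rabs (bump n x) <= M.
Proof.
  apply continuous_bounded_on; [lra |].
  intros x _; apply derivable_continuous_pt; exists (bump (S n) x); apply bump_derivable.
Qed.

Inductive expr :=
  | ECst (c : R) | EX | EY | EInvY | EW | ECos | ESin | EBump (n : nat)
  | EExp (e : expr) | EAdd (e1 e2 : expr) | EMul (e1 e2 : expr).

Fixpoint eval (w : R) (e : expr) (x y : R) : R :=
  match e with
  | ECst c => c
  | EX => x
  | EY => y
  | EInvY => / y
  | EW => w
  | ECos => cos (w * x * y)
  | ESin => sin (w * x * y)
  | EBump n => bump n x
  | EExp a => exp (eval w a x y)
  | EAdd a b => eval w a x y + eval w b x y
  | EMul a b => eval w a x y * eval w b x y
  end.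

Fixpoint expr_dx (e : expr) : expr :=
  match e with
  | ECst _ | EY | EInvY | EW => ECst 0
  | EX => ECst 1
  | ECos => EMul (ECst (-1)) (EMul (EMul EW EY) ESin)
  | ESin => EMul (EMul EW EY) ECos
  | EBump n => EBump (S n)
  | EExp a => EMul (EExp a) (expr_dx a)
  | EAdd a b => EAdd (expr_dx a) (expr_dx b)
  | EMul a b => EAdd (EMul (expr_dx a) b) (EMul a (expr_dx b))
  end.

Fixpoint expr_dy (e : expr) : expr :=
  match e with
  | ECst _ | EX | EW | EBump _ => ECst 0
  | EY => ECst 1
  | EInvY => EMul (ECst (-1)) (EMul EInvY EInvY)
  | ECos => EMul (ECst (-1)) (EMul (EMul EW EX) ESin)
  | ESin => EMul (EMul EW EX) ECos
  | EExp a => EMul (EExp a) (expr_dy a)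
  | EAdd a b => EAdd (expr_dy a) (expr_dy b)
  | EMul a b => EAdd (EMul (expr_dy a) b) (EMul a (expr_dy b))
  end.

Lemma eval_dx w e x y :
  derivable_pt_lim (fun t => eval w e t y) x (eval w (expr_dx e) x y).
Proof.
  induction e as [c | | | | | | | n | a IH | a IHa b IHb | a IHa b IHb]; simpl;
    try apply derivable_pt_lim_const.
  - apply derivable_pt_lim_id.
  - apply is_derive_Reals; auto_derive; [trivial | ring].
  - apply is_derive_Reals; auto_derive; [trivial | ring].
  - apply bump_derivable.
  - eapply derivable_pt_lim_rw.
    + apply (derivable_pt_lim_comp (fun t => eval w a t y) exp);
        [exact IH | apply derivable_pt_lim_exp].
    + ring.
  - apply (derivable_pt_lim_plus (fun t => eval w a t y) (fun t => eval w b t y)); assumption.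
  - apply (derivable_pt_lim_mult (fun t => eval w a t y) (fun t => eval w b t y)); assumption.
Qed.

Lemma eval_dy w e x y : 0 < y ->
  derivable_pt_lim (fun t => eval w e x t) y (eval w (expr_dy e) x y).
Proof.
  intros Hy.
  induction e as [c | | | | | | | n | a IH | a IHa b IHb | a IHa b IHb]; simpl;
    try apply derivable_pt_lim_const.
  - apply derivable_pt_lim_id.
  - apply is_derive_Reals; auto_derive; [lra | field; lra].
  - apply is_derive_Reals; auto_derive; [trivial | ring].
  - apply is_derive_Reals; auto_derive; [trivial | ring].
  - eapply derivable_pt_lim_rw.
    + apply (derivable_pt_lim_comp (fun t => eval w a x t) exp);
        [exact IH | apply derivable_pt_lim_exp].
    + ring.
  - apply (derivable_pt_lim_plus (fun t => eval w a x t) (fun t => eval w b x t)); assumption.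
  - apply (derivable_pt_lim_mult (fun t => eval w a x t) (fun t => eval w b x t)); assumption.
Qed.

Lemma eval_bounded w e a b : 0 < a ->
  exists M, forall x y, -1 <= x <= 1 -> a <= y <= b -> Rabs (eval w e x y) <= M.
Proof.
  intros Ha.
  induction e as [c | | | | | | | n | e [M HM] | e1 [M1 H1] e2 [M2 H2] | e1 [M1 H1] e2 [M2 H2]];
    simpl.
  - exists (Rabs c); intros; lra.
  - exists 1; intros; apply Rabs_le; lra.
  - exists b; intros; rewrite Rabs_right; lra.
  - exists (/ a); intros x y _ Hy.
    rewrite Rabs_right by (left; apply Rinv_0_lt_compat; lra).
    apply Rinv_le_contravar; lra.
  - exists (Rabs w); intros; lra.
  - exists 1; intros; apply Rabs_le, COS_bound.
  - exists 1; intros; apply Rabs_le, SIN_bound.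
  - destruct (bump_bounded n) as [M HM]; exists M; intros; apply HM; assumption.
  - exists (exp M); intros x y Hx Hy.
    rewrite Rabs_right by (left; apply exp_pos).
    specialize (HM x y Hx Hy). pose proof (Rle_abs (eval w e x y)).
    destruct (Rle_lt_or_eq_dec (eval w e x y) M) as [Hlt | ->]; [lra | | lra].
    left; apply exp_increasing, Hlt.
  - exists (M1 + M2); intros x y Hx Hy.
    specialize (H1 x y Hx Hy); specialize (H2 x y Hx Hy).
    eapply Rle_trans; [apply Rabs_triang | lra].
  - exists (M1 * M2); intros x y Hx Hy.
    rewrite Rabs_mult. apply Rmult_le_compat; auto using Rabs_pos.
Qed.

Lemma eval_continuous_x w e x y : continuous (fun t => eval w e t y) x.
Proof.
  apply (ex_derive_continuous (V := R_NormedModule)).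
  exists (eval w (expr_dx e) x y); apply is_derive_Reals, eval_dx.
Qed.

Lemma ex_RInt_eval w e y a b : ex_RInt (fun x => eval w e x y) a b.
Proof.
  apply (ex_RInt_continuous (V := R_CompleteNormedModule)); intros; apply eval_continuous_x.
Qed.

Fixpoint w_free (e : expr) : bool :=
  match e with
  | EW | ECos | ESin => false
  | EExp a => w_free a
  | EAdd a b | EMul a b => w_free a && w_free b
  | _ => true
  end.

Lemma eval_w_free w w' e x y : w_free e = true -> eval w e x y = eval w' e x y.
Proof.
  induction e; simpl; intros H; try discriminate; try reflexivity.
  - rewrite IHe; [reflexivity | exact H].
  - apply andb_prop in H as [Ha Hb]. rewrite IHe1, IHe2; auto.
  - apply andb_prop in H as [Ha Hb]. rewrite IHe1, IHe2; auto.
Qed.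

Lemma w_free_dx e : w_free e = true -> w_free (expr_dx e) = true.
Proof.
  induction e; simpl; intros H; try discriminate; try reflexivity.
  - rewrite H, IHe; auto.
  - apply andb_prop in H as [Ha Hb]. rewrite IHe1, IHe2; auto.
  - apply andb_prop in H as [Ha Hb]. rewrite Ha, Hb, IHe1, IHe2; auto.
Qed.

Lemma w_free_dy e : w_free e = true -> w_free (expr_dy e) = true.
Proof.
  induction e; simpl; intros H; try discriminate; try reflexivity.
  - rewrite H, IHe; auto.
  - apply andb_prop in H as [Ha Hb]. rewrite IHe1, IHe2; auto.
  - apply andb_prop in H as [Ha Hb]. rewrite Ha, Hb, IHe1, IHe2; auto.
Qed.

Definition expr_int (w : R) (e : expr) (y : R) : R := RInt (fun x => eval w e x y) (-1) 1.

Lemma expr_int_derivable w e y : 0 < y ->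
  derivable_pt_lim (expr_int w e) y (expr_int w (expr_dy e) y).
Proof.
  intros Hy.
  destruct (eval_bounded w (expr_dy (expr_dy e)) (y / 2) (3 * y / 2)) as [M HM]; [lra |].
  apply (derivable_pt_lim_RInt_param (eval w e) (eval w (expr_dy e))
           (eval w (expr_dy (expr_dy e))) (-1) 1 y (y / 2) M); try lra;
    try (intros; apply ex_RInt_eval).
  intros x t Hx Ht. apply Rabs_le_between in Ht.
  split; [| split]; [apply eval_dy; lra | apply eval_dy; lra | apply HM; lra].
Qed.

Lemma expr_int_dx w e y : eval w e (-1) y = 0 -> eval w e 1 y = 0 ->
  expr_int w (expr_dx e) y = 0.
Proof.
  intros Hl Hr.
  assert (HI : is_RInt (fun x => eval w (expr_dx e) x y) (-1) 1
                 (minus (eval w e 1 y) (eval w e (-1) y))).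
  { apply (is_RInt_derive (V := R_CompleteNormedModule) (fun x => eval w e x y)).
    - intros; apply is_derive_Reals, eval_dx.
    - intros; apply eval_continuous_x. }
  unfold expr_int. rewrite (is_RInt_unique _ _ _ _ HI), Hl, Hr.
  apply Rminus_diag.
Qed.

Lemma derivable_pt_lim_locally_zero f x l a b : a < x < b ->
  (forall z, a < z < b -> f z = 0) -> derivable_pt_lim f x l -> l = 0.
Proof.
  intros Hx Hz Hf. apply (uniqueness_limite f x l 0 Hf).
  apply (derivable_pt_lim_locally_ext (fun _ => 0) f x a b 0 Hx);
    [intros z Hzab; symmetry; apply Hz, Hzab | apply derivable_pt_lim_const].
Qed.

Definition vanish_outside (e : expr) : Prop :=
  forall w x y, (x < -1 / 2 \/ 1 / 2 < x) -> 0 < y -> eval w e x y = 0.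

Lemma vanish_outside_dx e : vanish_outside e -> vanish_outside (expr_dx e).
Proof.
  intros H w x y Hx Hy.
  destruct Hx as [Hx | Hx];
    [apply (derivable_pt_lim_locally_zero (fun t => eval w e t y) x _ (x - 1) (-1 / 2))
    | apply (derivable_pt_lim_locally_zero (fun t => eval w e t y) x _ (1 / 2) (x + 1))];
    solve [lra | apply eval_dx | intros z Hz; apply H; lra].
Qed.

Lemma vanish_outside_dy e : vanish_outside e -> vanish_outside (expr_dy e).
Proof.
  intros H w x y Hx Hy.
  apply (derivable_pt_lim_locally_zero (fun t => eval w e x t) y _ 0 (2 * y));
    [lra | | apply eval_dy, Hy].
  intros z Hz; apply H; [exact Hx | lra].
Qed.

(* The amplitude of [cos (w x y)] after one y-derivative, once the large term
   [- w x B sin (w x y)] has been rewritten as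
   [d/dx (x B cos (w x y) / y) - (B + x d/dx B) cos (w x y) / y]. *)
Definition osc_dy (e : expr) : expr :=
  EAdd (expr_dy e) (EMul (ECst (-1)) (EMul EInvY (EAdd e (EMul EX (expr_dx e))))).

Lemma vanish_outside_osc_dy e : vanish_outside e -> vanish_outside (osc_dy e).
Proof.
  intros H w x y Hx Hy. unfold osc_dy; simpl.
  rewrite (vanish_outside_dy e H), (vanish_outside_dx e H), H by assumption. ring.
Qed.

Lemma w_free_osc_dy e : w_free e = true -> w_free (osc_dy e) = true.
Proof. intros H. unfold osc_dy; simpl. rewrite w_free_dy, w_free_dx, H; auto. Qed.

Lemma expr_int_osc_derivable w A B y : 0 < y -> vanish_outside B ->
  derivable_pt_lim (expr_int w (EAdd A (EMul B ECos))) y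
    (expr_int w (EAdd (expr_dy A) (EMul (osc_dy B) ECos)) y).
Proof.
  intros Hy HB. eapply derivable_pt_lim_rw; [apply expr_int_derivable, Hy |].
  set (T := EMul (EMul EInvY (EMul EX B)) ECos).
  assert (Hsplit : forall x, eval w (expr_dy (EAdd A (EMul B ECos))) x y
    = eval w (EAdd (expr_dy A) (EMul (osc_dy B) ECos)) x y + eval w (expr_dx T) x y).
  { intros x. unfold T, osc_dy; simpl. field. lra. }
  assert (HT : expr_int w (expr_dx T) y = 0).
  { apply expr_int_dx; unfold T; simpl; rewrite HB by (lra || assumption); ring. }
  unfold expr_int at 1. rewrite (RInt_ext _ _ _ _ (fun x _ => Hsplit x)).
  transitivity (expr_int w (EAdd (expr_dy A) (EMul (osc_dy B) ECos)) y + expr_int w (expr_dx T) y).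
  - exact (RInt_plus _ _ _ _ (ex_RInt_eval _ _ _ _ _) (ex_RInt_eval _ _ _ _ _)).
  - rewrite HT; ring.
Qed.

Definition g_expr (e : expr) : expr := EExp (EMul (ECst (-5)) (EMul e e)).

Definition G1 : expr := g_expr (EAdd EX (EAdd (ECst (- s1)) (EMul (ECst (-1)) EY))).
Definition G2 : expr := g_expr (EAdd EX (EAdd (ECst (- s2)) EY)).

Definition amp_A (n : nat) : expr :=
  Nat.iter n expr_dy (EMul (EBump 0) (EAdd (EMul G1 G1) (EMul G2 G2))).
Definition amp_B (n : nat) : expr :=
  Nat.iter n osc_dy (EMul (ECst 2) (EMul (EBump 0) (EMul G1 G2))).

Definition Q_expr (n : nat) : expr := EAdd (amp_A n) (EMul (amp_B n) ECos).

Lemma w_free_amp_A n : w_free (amp_A n) = true.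
Proof. induction n as [| n IH]; [reflexivity | apply (w_free_dy (amp_A n) IH)]. Qed.

Lemma w_free_amp_B n : w_free (amp_B n) = true.
Proof. induction n as [| n IH]; [reflexivity | apply (w_free_osc_dy (amp_B n) IH)]. Qed.

Lemma vanish_outside_amp_B n : vanish_outside (amp_B n).
Proof.
  induction n as [| n IH]; [| apply (vanish_outside_osc_dy (amp_B n) IH)].
  intros w x y Hx _. simpl. rewrite bump_vanish by lra. ring.
Qed.

Lemma Q_expr_derivable w n y : 0 < y ->
  derivable_pt_lim (expr_int w (Q_expr n)) y (expr_int w (Q_expr (S n)) y).
Proof. intros Hy. apply expr_int_osc_derivable; [exact Hy | apply vanish_outside_amp_B]. Qed.

Lemma expr_int_Q_bounded a b n : 0 < a ->
  exists C, forall w y, a <= y <= b -> Rabs (expr_int w (Q_expr n) y) <= C.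
Proof.
  intros Ha.
  destruct (eval_bounded 0 (amp_A n) a b Ha) as [MA HA].
  destruct (eval_bounded 0 (amp_B n) a b Ha) as [MB HB].
  exists (2 * (MA + MB)); intros w y Hy.
  replace (2 * (MA + MB)) with ((1 - -1) * (MA + MB)) by ring.
  apply abs_RInt_le_const; [lra | apply ex_RInt_eval |].
  intros x Hx. simpl.
  rewrite (eval_w_free w 0 (amp_A n)), (eval_w_free w 0 (amp_B n))
    by (apply w_free_amp_A || apply w_free_amp_B).
  specialize (HA x y Hx Hy). specialize (HB x y Hx Hy).
  assert (Rabs (cos (w * x * y)) <= 1) by apply Rabs_le, COS_bound.
  eapply Rle_trans; [apply Rabs_triang |]. rewrite Rabs_mult.
  pose proof (Rabs_pos (eval 0 (amp_B n) x y)). pose proof (Rabs_pos (cos (w * x * y))). nra.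
Qed.

(* [|u|^2 = g1^2 + g2^2 + 2 g1 g2 cos (Phi0(x-y)/eps - Phi0(x+y)/eps)] and the phase
   difference is [- 4 x y / eps]. *)
Lemma u_abs2_psi1_eq eps x y : 0 < eps ->
  u_abs2 eps x y * psi1 x = eval (4 / eps) (Q_expr 0) x y.
Proof.
  intros He. simpl. rewrite bump_0.
  replace (exp (-5 * ((x + (- s1 + -1 * y)) * (x + (- s1 + -1 * y)))))
    with (g (x - s1 - y)) by (unfold g; f_equal; ring).
  replace (exp (-5 * ((x + (- s2 + y)) * (x + (- s2 + y))))) with (g (x - s2 + y))
    by (unfold g; f_equal; ring).
  unfold u_abs2, u_re, u_im.
  set (a1 := Phi0 (x - y) / eps). set (a2 := Phi0 (x + y) / eps).
  assert (Hphase : cos (4 / eps * x * y) = cos a1 * cos a2 + sin a1 * sin a2).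
  { rewrite <- cos_minus, <- cos_neg. f_equal. unfold a1, a2, Phi0. field. lra. }
  rewrite Hphase.
  set (g1 := g (x - s1 - y)). set (g2 := g (x - s2 + y)).
  transitivity (psi1 x * (g1 * g1 * (Rsqr (sin a1) + Rsqr (cos a1))
                          + g2 * g2 * (Rsqr (sin a2) + Rsqr (cos a2)))
                + 2 * (psi1 x * (g1 * g2)) * (cos a1 * cos a2 + sin a1 * sin a2));
    [unfold Rsqr; ring | rewrite !sin2_cos2; ring].
Qed.

Lemma Q1_eq eps y : 0 < eps -> Q1 eps y = expr_int (4 / eps) (Q_expr 0) y.
Proof.
  intros He. unfold Q1, expr_int.
  rewrite Defs_RInt_eq; [| lra |].
  - apply RInt_ext; intros x _. apply u_abs2_psi1_eq, He.
  - intros x _. apply (continuity_pt_ext (fun x => eval (4 / eps) (Q_expr 0) x y)).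
    + intros t; symmetry; apply u_abs2_psi1_eq, He.
    + apply derivable_continuous_pt. eexists; apply eval_dx.
Qed.

Theorem mainTheorem1 :
  forall a b : R, 0 < a -> a <= b ->
  forall k : nat, exists C : R,
    forall eps : R, 0 < eps <= 1 ->
    forall y : R, a <= y <= b ->
      derivable_pt_lim (Dn k (Q1 eps)) y (Dn (S k) (Q1 eps) y) /\
      Rabs (Dn k (Q1 eps) y) <= C.
Proof.
  intros a b Ha Hab k.
  destruct (expr_int_Q_bounded a b k Ha) as [C HC].
  exists C; intros eps Heps y Hy.
  assert (HDn : forall n t, 0 < t -> Dn n (Q1 eps) t = expr_int (4 / eps) (Q_expr n) t).
  { apply Dn_eq_on_pos; intros; [apply Q1_eq; lra | apply Q_expr_derivable; assumption]. }
  rewrite !HDn by lra. split; [| apply HC, Hy].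
  apply (derivable_pt_lim_locally_ext (expr_int (4 / eps) (Q_expr k)) _ y 0 (2 * y)); [lra | |].
  - intros t Ht; symmetry; apply HDn; lra.
  - apply Q_expr_derivable; lra.
Qed.
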